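(* Let $V$ be a finite-dimensional space of $k$-forms on $T^n$ and let $\{E_{F,F'}:F\subseteq F'\subseteq T^n\}$ be a consistent family of extension operators. For $0\le d\le n$ let $$W_d:=\bigoplus_{F\subseteq T^n,\ \dim F=d}E_{F,T^n}\mathring V(F).$$ Then $V_d=W_d\oplus V_{d+1}$ for each $d$, where $V_d$ is the subspace of forms in $V$ whose traces vanish on all $(d-1)$-dimensional faces of $T^n$.
   Context: $T^n\subset\mathbb R^{n+1}$ is the standard simplex $\{\lambda_i\ge0,\ \sum\lambda_i=1\}$. For a face $F$, $V(F)=\mathrm{tr}_{T^n,F}(V)$, where $\mathrm{tr}_{F',F}$ denotes pullback of forms from a face $F'$ to a subface $F$; $\mathring V(F)$ is the subspace of $V(F)$ of forms with vanishing trace on $\partial F$. $V_0=V$, $V_{n+1}=0$. For faces $K\subseteq F$, a linear map $E_{K,F}:V(K)\to V(F)$ is an extension operator if $\mathrm{tr}_{F,K}E_{K,F}\alpha=\alpha$ for all $\alpha\in V(K)$. A family of extension operators $\{E_{F,F'}\}$ is consistent if for any subfaces $F,F'$ of a face $H$, with $K=F\cap F'$, one has $\mathrm{tr}_{H,F'}\circ E_{F,H}=E_{K,F'}\circ\mathrm{tr}_{F,K}$ on $V(F)$. (Part of the claim is that the sum defining $W_d$ is direct.) *)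

From HB Require Import structures.
From mathcomp Require Import all_boot all_order all_algebra.
From mathcomp Require Import reals.
Set Implicit Arguments. Unset Strict Implicit. Unset Printing Implicit Defensive.
Import Order.TTheory GRing.Theory Num.Theory.
Local Open Scope ring_scope.

Section SimplexForms.
Variables (R : realType) (n k : nat).

(* A (not necessarily smooth) k-form on R^{n+1}: at a point x, a function of
   k vectors.  Forms on a sface are represented by their canonical
   representative, which vanishes off the sface / off its tangent space. *)
Definition kform := 'rV[R]_(n.+1) -> ('I_k -> 'rV[R]_(n.+1)) -> R.

(* A sface of T^n is given by its vertex set sigma (a subset of {0..n});
   dim = #|sigma| - 1.  The empty set is the empty sface. *)
Definition sface := {set 'I_(n.+1)}.

Definition in_face (s : sface) (x : 'rV[R]_(n.+1)) : bool :=
  [forall i, 0 <= x ord0 i] && (\sum_i x ord0 i == 1)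
  && [forall i, (i \notin s) ==> (x ord0 i == 0)].

Definition tangent (s : sface) (v : 'rV[R]_(n.+1)) : bool :=
  (\sum_i v ord0 i == 0) && [forall i, (i \notin s) ==> (v ord0 i == 0)].

(* trace (pullback) onto the sface sigma: evaluate only at points of sigma
   on tangent vectors of sigma.  tr_{F',F} = trace F for every F' containing F. *)
Definition trace (s : sface) (w : kform) : kform := fun x vs =>
  if in_face s x && [forall j, tangent s (vs j)] then w x vs else 0.

Definition upd (vs : 'I_k -> 'rV[R]_(n.+1)) (j : 'I_k) (u : 'rV[R]_(n.+1)) :=
  fun l => if l == j then u else vs l.

Definition is_form_on (s : sface) (w : kform) : Prop :=
  [/\ trace s w = w,
      (forall x, in_face s x -> forall vs, (forall j, tangent s (vs j)) ->
         forall j u v (a : R), tangent s u -> tangent s v ->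
         w x (upd vs j (a *: u + v)) = a * w x (upd vs j u) + w x (upd vs j v)) &
      (forall x, in_face s x -> forall vs, (forall j, tangent s (vs j)) ->
         forall i j, i != j -> vs i = vs j -> w x vs = 0)].

Definition form0 : kform := fun _ _ => 0.
Definition form_add (w1 w2 : kform) : kform := fun x vs => w1 x vs + w2 x vs.
Definition form_scale (a : R) (w : kform) : kform := fun x vs => a * w x vs.
Definition form_sum (P : pred sface) (f : sface -> kform) : kform :=
  fun x vs => \sum_(s | P s) f s x vs.

(* V = the (finite-dimensional) span of the forms b_0,...,b_{m-1} *)
Definition span (m : nat) (b : 'I_m -> kform) (w : kform) : Prop :=
  exists c : 'I_m -> R, w = fun x vs => \sum_i c i * b i x vs.

Definition VF (m : nat) (b : 'I_m -> kform) (s : sface) (w : kform) : Prop :=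
  exists w0, span b w0 /\ w = trace s w0.

Definition Vring (m : nat) (b : 'I_m -> kform) (s : sface) (w : kform) : Prop :=
  VF b s w /\ forall t : sface, t \proper s -> trace t w = form0.

(* V_d: forms in V whose traces vanish on all (d-1)-dimensional faces
   (faces with d vertices) *)
Definition Vd (m : nat) (b : 'I_m -> kform) (d : nat) (w : kform) : Prop :=
  span b w /\ forall t : sface, #|t| = d -> trace t w = form0.

Definition ext_family (m : nat) (b : 'I_m -> kform) (E : sface -> sface -> kform -> kform) : Prop :=
  forall K F : sface, K \subset F ->
  [/\ (forall a, VF b K a -> VF b F (E K F a)),
      (forall a1 a2 (c : R), VF b K a1 -> VF b K a2 ->
         E K F (form_add (form_scale c a1) a2) = form_add (form_scale c (E K F a1)) (E K F a2)) &
      (forall a, VF b K a -> trace K (E K F a) = a)].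

(* consistency: tr_{H,F'} o E_{F,H} = E_{K,F'} o tr_{F,K} on V(F), K = F \cap F' *)
Definition consistent (m : nat) (b : 'I_m -> kform) (E : sface -> sface -> kform -> kform) : Prop :=
  forall F F' H : sface, F \subset H -> F' \subset H ->
  forall a, VF b F a -> trace F' (E F H a) = E (F :&: F') F' (trace (F :&: F') a).

(* W_d = sum over d-dimensional faces F of E_{F,T^n} \mathring V(F) *)
Definition Wd (m : nat) (b : 'I_m -> kform) (E : sface -> sface -> kform -> kform) (d : nat)
    (w : kform) : Prop :=
  exists al : sface -> kform, (forall s : sface, #|s| = d.+1 -> Vring b s (al s)) /\
    w = form_sum (fun s => #|s| == d.+1) (fun s => E s setT (al s)).

End SimplexForms.

(* By consistency, for a in V°(F) the extension E_{F,T^n} a is invisible on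
   every face G not containing F: its trace on G is E_{F∩G,G} applied to the
   trace of a on the proper face F∩G of F, which vanishes.  Hence for a_F in
   V°(F), F ranging over the d-dimensional faces, the trace of
   Σ_F E_{F,T^n} a_F on a d-dimensional face G is a_G; this gives both
   directness statements.  For w in V_d, tr_F w lies in V°(F) because a face
   of dimension < d - 1 lies in one of dimension d - 1, and then
   w - Σ_F E_{F,T^n} tr_F w lies in V_{d+1}. *)
From Pilot Require Import Defs.
From HB Require Import structures.
From mathcomp Require Import all_boot all_order all_algebra.
From mathcomp Require Import reals.
From mathcomp Require Import boolp.
Import Order.TTheory GRing.Theory Num.Theory.
Local Open Scope ring_scope.
Set Implicit Arguments.
Unset Strict Implicit.

Lemma exists_supset_card (T : finType) (A : {set T}) (j : nat) :
  (#|A| <= j <= #|T|)%N -> exists2 B : {set T}, A \subset B & #|B| = j.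
Proof.
elim: j => [|j IHj]; first by rewrite leqn0 => /andP[/eqP A0 _]; exists A.
move=> /andP[Aj jT].
have [<-|Aj'] := eqVneq #|A| j.+1; first by exists A.
have [|B AB cardB] := IHj; first by rewrite -ltnS ltn_neqAle Aj' Aj ltnW.
have /card_gt0P[x Bx] : (0 < #|~: B|)%N.
  by rewrite -(ltn_add2l #|B|) addn0 cardsC cardB.
rewrite in_setC in Bx.
exists (x |: B); first exact: subset_trans AB (subsetUr _ _).
by rewrite cardsU1 Bx cardB.
Qed.

Section SimplexForms.
Variables (R : realType) (n k : nat).
Implicit Types (s t : sface n) (x : 'rV[R]_n.+1) (w : kform R n k).

#[local] Arguments form0 {R n k}.

Lemma form_ext w1 w2 : (forall x vs, w1 x vs = w2 x vs) -> w1 = w2.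
Proof. by move=> eqw; apply: funext => x; apply: funext. Qed.

Lemma in_faceS s t x : s \subset t -> in_face s x -> in_face t x.
Proof.
move=> st /andP[xT /forallP offs]; rewrite /in_face xT /=.
apply/forallP => i; apply/implyP => it.
by apply: (implyP (offs i)); apply: contra it; apply: (subsetP st).
Qed.

Lemma tangentS s t x : s \subset t -> tangent s x -> tangent t x.
Proof.
move=> st /andP[x0 /forallP offs]; rewrite /tangent x0 /=.
apply/forallP => i; apply/implyP => it.
by apply: (implyP (offs i)); apply: contra it; apply: (subsetP st).
Qed.

Lemma trace_traceS s t w : s \subset t -> trace s (trace t w) = trace s w.
Proof.
move=> st; apply: form_ext => x vs; rewrite /trace.
case: ifP => // /andP[xs /forallP vss].
rewrite (in_faceS st xs); case: forallP => // [][] j.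
exact: tangentS st (vss j).
Qed.

Lemma trace0 s : trace s form0 = form0 :> kform R n k.
Proof. by apply: form_ext => x vs; rewrite /trace; case: ifP. Qed.

Lemma trace_form_sum t (P : pred (sface n)) (f : sface n -> kform R n k) :
  trace t (form_sum P f) = form_sum P (fun s => trace t (f s)).
Proof.
by apply: form_ext => x vs; rewrite /trace /form_sum; case: ifP => // _; rewrite big1.
Qed.

Lemma form_sum_eq0 (P : pred (sface n)) (f : sface n -> kform R n k) :
  (forall s, P s -> f s = form0) -> form_sum P f = form0.
Proof. by move=> f0; apply: form_ext => x vs; rewrite /form_sum big1 // => s /f0->. Qed.

Section Basis.
Variables (m : nat) (b : 'I_m -> kform R n k).

Lemma span0 : Defs.span b form0.
Proof.
by exists (fun _ => 0); apply: form_ext => x vs; rewrite big1 // => i _; rewrite mul0r.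
Qed.

Lemma spanB w1 w2 : Defs.span b w1 -> Defs.span b w2 ->
  Defs.span b (fun x vs => w1 x vs - w2 x vs).
Proof.
move=> [c1 ->] [c2 ->]; exists (fun i => c1 i - c2 i); apply: form_ext => x vs.
by rewrite -sumrB; apply: eq_bigr => i _; rewrite mulrBl.
Qed.

Lemma span_form_sum (P : pred (sface n)) (f : sface n -> kform R n k) :
  (forall s, P s -> Defs.span b (f s)) -> Defs.span b (form_sum P f).
Proof.
move=> spanf.
have /fin_all_exists[c fE] : forall s, exists c : 'I_m -> R,
    P s -> f s = fun x vs => \sum_i c i * b i x vs.
  move=> s; have [Ps|_] := boolP (P s); last by exists (fun _ => 0).
  by have [c fsE] := spanf s Ps; exists c.
exists (fun i => \sum_(s | P s) c s i); apply: form_ext => x vs.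
rewrite /form_sum (eq_bigr (fun s => \sum_i c s i * b i x vs)) => [|s Ps];
  last by rewrite fE.
by rewrite exchange_big; apply: eq_bigr => i _; rewrite mulr_suml.
Qed.

Lemma VF0 s : VF b s form0.
Proof. by exists form0; rewrite trace0; split=> //; apply: span0. Qed.

Lemma trace_Vd_small d w t :
  Vd b d w -> (d <= n.+1)%N -> (#|t| <= d)%N -> trace t w = form0.
Proof.
move=> [_ w0] dn td.
have [|u tu cardu] := @exists_supset_card _ t d; first by rewrite td card_ord.
by rewrite -(trace_traceS w tu) (w0 u cardu) trace0.
Qed.

Lemma VdW d d' w : (d <= d' <= n.+1)%N -> Vd b d' w -> Vd b d w.
Proof.
move=> /andP[dd' d'n] Vw; split=> [|t td]; first by case: Vw.
by apply: trace_Vd_small Vw d'n _; rewrite td.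
Qed.

Hypothesis b_on_simplex : forall i, is_form_on setT (b i).

Lemma trace_setT_span w : Defs.span b w -> trace setT w = w.
Proof.
move=> [c ->]; apply: form_ext => x vs; rewrite /trace; case: ifP => // xvs.
rewrite big1 // => i _; have [<- _ _] := b_on_simplex i.
by rewrite /trace xvs mulr0.
Qed.

Lemma VF_setT_span w : VF b setT w -> Defs.span b w.
Proof. by move=> [w0 [w0V ->]]; rewrite trace_setT_span. Qed.

Variable E : sface n -> sface n -> kform R n k -> kform R n k.
Hypotheses (E_ext : ext_family b E) (E_consistent : consistent b E).

Lemma ext0 s t : s \subset t -> E s t form0 = form0.
Proof.
move=> st; have [_ E_lin _] := E_ext st.
have := E_lin form0 form0 1 (VF0 s) (VF0 s).
have -> : form_add (form_scale 1 form0) form0 = form0 :> kform R n k.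
  by apply: form_ext => x vs; rewrite /form_add /form_scale mulr0 addr0.
move=> E0E; apply: form_ext => x vs.
have := congr1 (fun w => w x vs - E s t form0 x vs) E0E.
by rewrite /form_add /form_scale mul1r addrK subrr => <-.
Qed.

Lemma trace_ext_notS s t a :
  Vring b s a -> ~~ (s \subset t) -> trace t (E s setT a) = form0.
Proof.
move=> [aV a0] st.
rewrite (E_consistent (subsetT s) (subsetT t) aV) a0 ?ext0 ?subsetIr //.
by rewrite properE subsetIl subsetI subxx.
Qed.

Section Wd.
Variables (d : nat) (a : sface n -> kform R n k).
Hypothesis a_Vring : forall s, #|s| = d.+1 -> Vring b s (a s).

Let ext_sum := form_sum (fun s => #|s| == d.+1) (fun s => E s setT (a s)).

Lemma trace_ext_sum t : #|t| = d.+1 -> trace t ext_sum = a t.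
Proof.
move=> tcard; rewrite trace_form_sum; apply: form_ext => x vs.
rewrite /form_sum (bigD1 t) ?tcard //= big1 ?addr0.
  by have [_ _ ->] := E_ext (subsetT t); case: (a_Vring tcard).
move=> s /andP[/eqP scard neq_st]; rewrite (trace_ext_notS (a_Vring scard)) //.
by apply: contra neq_st => st; rewrite eqEcard st scard tcard /=.
Qed.

Lemma ext_sum_traces0 :
  (forall t, #|t| = d.+1 -> trace t ext_sum = form0) ->
  forall s, #|s| = d.+1 -> E s setT (a s) = form0.
Proof. by move=> sum0 s scard; rewrite -(trace_ext_sum scard) sum0 // ext0. Qed.

Lemma ext_sum_span : Defs.span b ext_sum.
Proof.
apply: span_form_sum => s /eqP scard; apply: VF_setT_span.
by have [Ea _ _] := E_ext (subsetT s); apply: Ea; case: (a_Vring scard).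
Qed.

Lemma ext_sum_Vd : Vd b d ext_sum.
Proof.
split=> [|t tcard]; first exact: ext_sum_span.
rewrite trace_form_sum; apply: form_sum_eq0 => s /eqP scard.
rewrite (trace_ext_notS (a_Vring scard)) //.
by apply: contraL (ltnSn d) => /subset_leq_card; rewrite scard tcard -ltnNge.
Qed.

End Wd.

Lemma Wd_Vd d w : Wd b E d w -> Vd b d w.
Proof. by move=> [a [a_Vring ->]]; apply: ext_sum_Vd. Qed.

Lemma Vd_decompose d w : (d <= n)%N -> Vd b d w ->
  exists w1 w2, [/\ Wd b E d w1, Vd b d.+1 w2 & w = form_add w1 w2].
Proof.
move=> dn Vw; have [wV _] := Vw.
have traces_Vring s : #|s| = d.+1 -> Vring b s (trace s w).
  move=> scard; split=> [|t ts]; first by exists w.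
  rewrite trace_traceS ?proper_sub //; apply: trace_Vd_small Vw (leqW dn) _.
  by rewrite -ltnS -scard proper_card.
pose w1 := form_sum (fun s => #|s| == d.+1) (fun s => E s setT (trace s w)).
have W1 : Wd b E d w1 by exists (fun s => trace s w).
exists w1, (fun x vs => w x vs - w1 x vs); split=> //; last first.
  by apply: form_ext => x vs; rewrite /form_add addrC subrK.
split=> [|t tcard]; first by apply: spanB wV (ext_sum_span traces_Vring).
apply: form_ext => x vs.
have := congr1 (fun u => u x vs) (trace_ext_sum traces_Vring tcard).
by rewrite /w1 /trace /form0; case: ifP => // _ ->; rewrite subrr.
Qed.

End Basis.
End SimplexForms.

Unset Implicit Arguments.
Set Strict Implicit.

Theorem propositionA2 (R : realType) (n k m : nat) (b : 'I_m -> kform R n k)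
    (E : sface n -> sface n -> kform R n k -> kform R n k) :
  (forall i, is_form_on setT (b i)) ->
  ext_family b E -> consistent b E ->
  forall d : nat, (d <= n)%N ->
  [/\ (* W_d and V_{d+1} are subspaces of V_d *)
      (forall w, Wd b E d w -> Vd b d w),
      (forall w, Vd b d.+1 w -> Vd b d w),
      (* V_d = W_d + V_{d+1} *)
      (forall w, Vd b d w -> exists w1 w2,
          [/\ Wd b E d w1, Vd b d.+1 w2 & w = form_add w1 w2]),
      (* W_d \cap V_{d+1} = 0 *)
      (forall w, Wd b E d w -> Vd b d.+1 w -> w = @form0 R n k) &
      (* the sum defining W_d is direct *)
      (forall al : sface n -> kform R n k,
          (forall s : sface n, #|s| = d.+1 -> Vring b s (al s)) ->
          form_sum (fun s => #|s| == d.+1) (fun s => E s setT (al s)) = @form0 R n k ->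
          forall s : sface n, #|s| = d.+1 -> E s setT (al s) = @form0 R n k)].
Proof.
move=> b_on_simplex E_ext E_consistent d dn; split.
- exact: Wd_Vd.
- by move=> w; apply: VdW; rewrite leqnSn ltnS.
- by move=> w; apply: Vd_decompose.
- move=> w [a [a_Vring ->]] [_ w0]; apply: form_sum_eq0 => s /eqP.
  exact: (ext_sum_traces0 E_ext E_consistent a_Vring).
- move=> a a_Vring sum0; apply: (ext_sum_traces0 E_ext E_consistent a_Vring).
  by move=> t _; rewrite sum0 trace0.
Qed.
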